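(* Let $\psi$ be a convex function on a convex subset of a real vector space, with (sub)gradient $\nabla\psi$, which is $\eta$-exp-concave for some $\eta>0$ and satisfies $0\le\psi\le m$. Then for all $x,y$ in its domain, \[ \psi(x)-\psi(y)-\langle\nabla\psi|_y,x-y\rangle\ \ge\ \frac{|\psi(x)-\psi(y)|^2}{2m\vee(4/\eta)}. \]
   Context: $\psi$ is $\eta$-exp-concave if $e^{-\eta\psi}$ is concave. $a\vee b=\max(a,b)$. *)

From HB Require Import structures.
From mathcomp Require Import all_boot all_order all_algebra.
From mathcomp Require Import all_classical all_reals.
From mathcomp Require Import sequences exp.
Set Implicit Arguments. Unset Strict Implicit. Unset Printing Implicit Defensive.
Import Order.TTheory GRing.Theory Num.Theory.
Local Open Scope ring_scope.
Local Open Scope classical_set_scope.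

Definition convex_dom (R : realType) (V : lmodType R) (D : set V) : Prop :=
  forall x y t, D x -> D y -> 0 <= t -> t <= 1 -> D (t *: x + (1 - t) *: y).

Definition convex_on (R : realType) (V : lmodType R) (D : set V) (f : V -> R) : Prop :=
  forall x y t, D x -> D y -> 0 <= t -> t <= 1 ->
    f (t *: x + (1 - t) *: y) <= t * f x + (1 - t) * f y.

Definition concave_on (R : realType) (V : lmodType R) (D : set V) (f : V -> R) : Prop :=
  forall x y t, D x -> D y -> 0 <= t -> t <= 1 ->
    t * f x + (1 - t) * f y <= f (t *: x + (1 - t) *: y).

Definition exp_concave (R : realType) (V : lmodType R) (D : set V) (eta : R) (psi : V -> R) : Prop :=
  concave_on D (fun x => expR (- (eta * psi x))).

Definition linear_functional (R : realType) (V : lmodType R) (l : V -> R) : Prop :=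
  forall a u v, l (a *: u + v) = a * l u + l v.

Definition subgradient (R : realType) (V : lmodType R) (D : set V) (psi : V -> R)
    (g : V -> V -> R) : Prop :=
  forall y, D y -> linear_functional (g y) /\ forall x, D x -> psi y + g y (x - y) <= psi x.

From HB Require Import structures.
From mathcomp Require Import all_boot all_order all_algebra.
From mathcomp Require Import all_classical all_reals.
From mathcomp Require Import sequences exp.
From mathcomp Require Import ring lra.
Import Order.TTheory GRing.Theory Num.Theory.
Local Open Scope ring_scope.
Local Open Scope classical_set_scope.

(* Write [h = exp (- eta psi)], [d = psi x - psi y] and [c = <g y, x - y>].
   Along the segment from [y] to [x], concavity of [h] and the subgradient
   inequality give [t (h x - h y) <= h y (exp (- eta t c) - 1)]; letting
   [t -> 0] yields the tangent bound [h x - h y <= - eta c h y], i.e.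
   [eta (d - c) >= phi (eta d)] with [phi u = u - 1 + exp (- u)].  Finally
   [phi u >= u^2 / 4] for [u <= 2] and [phi u >= u / 2 >= u^2 / (2 eta m)]
   for [2 < u <= eta m]. *)

Lemma linear_functionalZ {R : realType} {V : lmodType R} {l : V -> R} :
  linear_functional l -> forall a u, l (a *: u) = a * l u.
Proof.
move=> l_lin a u.
have l0 : l 0 = 0 by have := l_lin 1 0 0; rewrite scale1r addr0 mul1r; lra.
by have := l_lin a u 0; rewrite !addr0 l0 addr0.
Qed.

Lemma ler_of_le_addr_linear (R : realFieldType) (a b k t0 : R) :
  0 < t0 -> 0 <= k -> (forall t, 0 < t -> t <= t0 -> a <= b + k * t) ->
  a <= b.
Proof.
move=> t0_gt0 k_ge0 a_le; apply/ler_addgt0Pr => e e_gt0.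
pose t := Num.min t0 (e / (k + 1)).
have t_gt0 : 0 < t by rewrite lt_min t0_gt0 divr_gt0 //; lra.
have t_le_t0 : t <= t0 by rewrite ge_min lexx.
have kt_le_e : k * t <= e.
  have : t * (k + 1) <= e by rewrite -ler_pdivlMr ?ge_min ?lexx ?orbT //; lra.
  nra.
by apply: le_trans (a_le t t_gt0 t_le_t0) _; rewrite lerD2l.
Qed.

Lemma expRN_le_quadratic (R : realType) (s : R) :
  -1/2 <= s -> expR (- s) <= 1 - s + 2 * s ^+ 2.
Proof.
move=> s_ge.
have expRNs_gt0 := expR_gt0 (- s).
(* [exp (- s) (1 + s) <= 1] and [(1 + s) (1 - s + 2 s^2) = 1 + s^2 (1 + 2 s)]. *)
have : expR (- s) * (1 + s) <= 1.
  have := expR_ge1Dx s.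
  have : expR (- s) * expR s = 1 by rewrite -expRD addNr expR0.
  nra.
nra.
Qed.

Lemma sqr_le_expR_gap (R : realType) (u L M : R) :
  u <= L -> 2 * L <= M -> 4 <= M -> u ^+ 2 <= (u - 1 + expR (- u)) * M.
Proof.
move=> u_le_L LM M_ge4.
have expRNu_gt0 := expR_gt0 (- u).
have [u_le2|u_gt2] := lerP u 2; last by nra.
have half_le : 1 - u / 2 <= expR (- (u / 2)) by have := expR_ge1Dx (- (u / 2)).
have sqr_le : (1 - u / 2) ^+ 2 <= expR (- u).
  have -> : expR (- u) = expR (- (u / 2)) * expR (- (u / 2)).
    by rewrite -expRD; congr expR; field.
  by apply: ler_pM; lra.
have gap_ge : u ^+ 2 / 4 <= u - 1 + expR (- u) by nra.
nra.
Qed.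

Section ExpConcaveTangent.
Local Set Implicit Arguments.
Local Unset Strict Implicit.
Variables (R : realType) (V : lmodType R) (D : set V).
Variables (psi : V -> R) (g : V -> V -> R) (eta : R).
Hypotheses (D_convex : convex_dom D) (g_sub : subgradient D psi g).
Hypotheses (eta_gt0 : 0 < eta) (psi_expc : exp_concave D eta psi).

Lemma exp_concave_chord x y t : D x -> D y -> 0 <= t -> t <= 1 ->
  t * (expR (- (eta * psi x)) - expR (- (eta * psi y))) <=
  expR (- (eta * psi y)) * (expR (- (eta * t * g y (x - y))) - 1).
Proof.
move=> Dx Dy t_ge0 t_le1.
have [g_lin g_le] := g_sub Dy.
pose z := t *: x + (1 - t) *: y.
have Dz : D z by exact: D_convex.
have zy : z - y = t *: (x - y).
  by rewrite /z scalerBl scale1r scalerBr [LHS]addrC addrCA addKr.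
have psiz_ge : psi y + t * g y (x - y) <= psi z.
  by have := g_le z Dz; rewrite zy (linear_functionalZ g_lin).
have hz_le : expR (- (eta * psi z)) <=
             expR (- (eta * psi y)) * expR (- (eta * t * g y (x - y))).
  by rewrite -expRD ler_expR; have := ler_wpM2l (ltW eta_gt0) psiz_ge; lra.
have := psi_expc Dx Dy t_ge0 t_le1; rewrite /= -/z.
lra.
Qed.

Lemma exp_concave_tangent x y : D x -> D y ->
  expR (- (eta * psi x)) - expR (- (eta * psi y)) <=
  - (expR (- (eta * psi y)) * (eta * g y (x - y))).
Proof.
move=> Dx Dy.
set hx := expR _; set hy := expR _; set c := g y (x - y).
have hy_gt0 : 0 < hy by exact: expR_gt0.
pose w := (eta * c) ^+ 2.
have w_ge0 : 0 <= w by exact: sqr_ge0.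
(* For [t <= 1 / (4 w + 1)] the exponent [s = eta t c] satisfies [s^2 <= 1/4]. *)
apply: (@ler_of_le_addr_linear _ _ _ (2 * hy * w) (1 / (4 * w + 1))).
- by apply: divr_gt0; lra.
- nra.
move=> t t_gt0 t_le.
have t_small : t * (4 * w + 1) <= 1 by rewrite -ler_pdivlMr //; lra.
have t_le1 : t <= 1 by nra.
set s := eta * t * c.
have s_sqr : s ^+ 2 = w * t ^+ 2 by rewrite /s /w; ring.
have expRNs_le : expR (- s) <= 1 - s + 2 * s ^+ 2.
  by apply: expRN_le_quadratic; nra.
have chord_le := exp_concave_chord Dx Dy (ltW t_gt0) t_le1.
rewrite -/hx -/hy -/c -/s in chord_le.
have gap_le : hy * (expR (- s) - 1) <= hy * (- s + 2 * s ^+ 2).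
  by rewrite ler_pM2l //; lra.
rewrite -(ler_pM2l t_gt0).
have -> : t * (- (hy * (eta * c)) + 2 * hy * w * t) = hy * (- s + 2 * s ^+ 2).
  by rewrite s_sqr /s; ring.
exact: le_trans chord_le gap_le.
Qed.

Lemma exp_concave_expR_gap x y : D x -> D y ->
  expR (- (eta * (psi x - psi y))) - 1 <= - (eta * g y (x - y)).
Proof.
move=> Dx Dy.
have hy_gt0 := expR_gt0 (- (eta * psi y)).
rewrite -(ler_pM2l hy_gt0) mulrBr mulr1 -expRD.
have -> : - (eta * psi y) + - (eta * (psi x - psi y)) = - (eta * psi x) by ring.
have := exp_concave_tangent Dx Dy.
lra.
Qed.

End ExpConcaveTangent.

Theorem proposition4 (R : realType) (V : lmodType R) (D : set V)
  (psi : V -> R) (g : V -> V -> R) (eta m : R) :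
  convex_dom D -> convex_on D psi -> subgradient D psi g ->
  0 < eta -> exp_concave D eta psi ->
  (forall x, D x -> 0 <= psi x /\ psi x <= m) ->
  forall x y, D x -> D y ->
    (psi x - psi y) ^+ 2 / Num.max (2 * m) (4 / eta)
      <= psi x - psi y - g y (x - y).
Proof.
(* Convexity of [psi] already follows from the subgradient inequality. *)
move=> D_convex _ g_sub eta_gt0 psi_expc psi_bnd x y Dx Dy.
have gap_le := exp_concave_expR_gap D_convex g_sub eta_gt0 psi_expc Dx Dy.
have d_le_m : psi x - psi y <= m.
  by have [_ ?] := psi_bnd x Dx; have [? _] := psi_bnd y Dy; lra.
move: (psi x - psi y) (g y (x - y)) gap_le d_le_m => d c gap_le d_le_m.
set M := Num.max (2 * m) (4 / eta).
have etaM : eta * M = Num.max (2 * (eta * m)) 4.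
  by rewrite maxr_pMr ?ltW //; congr Num.max; [ring | field; exact: lt0r_neq0].
have [etaM_ge2m etaM_ge4] : 2 * (eta * m) <= eta * M /\ 4 <= eta * M.
  by rewrite etaM !le_max !lexx orbT.
have etaM_gt0 : 0 < eta * M by lra.
have M_gt0 : 0 < M by rewrite -(pmulr_rgt0 _ eta_gt0).
have sqr_le : (eta * d) ^+ 2 <= (eta * d - 1 + expR (- (eta * d))) * (eta * M).
  by apply: (@sqr_le_expR_gap _ _ (eta * m)); rewrite // ler_pM2l.
rewrite (ler_pdivrMr _ _ M_gt0) -(ler_pM2l (exprn_gt0 2 eta_gt0)).
rewrite -exprMn; apply: (le_trans sqr_le).
have -> : eta ^+ 2 * ((d - c) * M) = (eta * d - eta * c) * (eta * M) by ring.
by rewrite ler_pM2r //; lra.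
Qed.
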